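(* Let $q$ be a prime power, let $r,m>1$ be integers, $n=rm$, and let $k$ be a positive integer with $k\le m$. Let $V_1\in\mathcal{G}_q(m,k)$, let $\Phi:\mathbb{F}_{q^m}\to\mathbb{F}_{q^n}$ be an injective $\mathbb{F}_q$-linear map and put $V_2=\Phi(\mathbb{F}_{q^m})\in\mathcal{G}_q(n,m)$. Let $\mathcal{C}_2=\mathrm{Orb}_{\mathbb{F}_{q^n}^*}(V_2)$ and $\mathcal{C}_1=\mathrm{Orb}_{\mathbb{F}_{q^m}^*}(V_1)$. If $\mathcal{C}_2$ is full-length and $d(\mathcal{C}_2)>2(m-k)$, then the one-orbit code $\mathcal{C}_2\odot V_1:=\mathrm{Orb}_{\mathbb{F}_{q^n}^*}(\Phi(V_1))\subseteq\mathcal{G}_q(n,k)$ is full-length, and the multi-orbit code $\mathcal{C}_2\odot\mathcal{C}_1:=\bigcup_{\alpha\in\mathbb{F}_{q^m}^*}\mathrm{Orb}_{\mathbb{F}_{q^n}^*}(\Phi(\alpha V_1))\subseteq\mathcal{G}_q(n,k)$ is full-length.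
   Context: For positive integers $k\le N$, $\mathcal{G}_q(N,k)$ denotes the set of $k$-dimensional $\mathbb{F}_q$-subspaces of $\mathbb{F}_{q^N}$ (viewed as an $N$-dimensional $\mathbb{F}_q$-vector space). The subspace distance is $d(U,V)=\dim_{\mathbb{F}_q}(U+V)-\dim_{\mathbb{F}_q}(U\cap V)$, and for a code $\mathcal{C}$ (set of subspaces) $d(\mathcal{C})=\min\{d(U,V):U,V\in\mathcal{C},U\neq V\}$. For $V\in\mathcal{G}_q(N,k)$, $\mathrm{Orb}_{\mathbb{F}_{q^N}^*}(V)=\{\beta V:\beta\in\mathbb{F}_{q^N}^*\}$. A one-orbit code $\mathrm{Orb}_{\mathbb{F}_{q^N}^*}(V)$ is called full-length if $\{\beta\in\mathbb{F}_{q^N}^*:\beta V=V\}=\mathbb{F}_q^*$; a union of orbits $\bigcup_i \mathrm{Orb}(V_i)$ is called full-length if every $\mathrm{Orb}(V_i)$ is full-length. *)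

From HB Require Import structures.
From mathcomp Require Import all_boot all_order all_algebra all_field.
Set Implicit Arguments. Unset Strict Implicit. Unset Printing Implicit Defensive.
Import GRing.Theory.
Local Open Scope ring_scope.

(* A finite field F_{q^N} is modelled as a field extension K of a finite
   field F = F_q with \dim {:K} = N; F_q-subspaces are {vspace K}. *)
Section Defs.
Variables (F : finFieldType) (K : fieldExtType F).

Definition smul (b : K) (V : {vspace K}) : {vspace K} := (<[b]> * V)%VS.

Definition sorbit (V : {vspace K}) (U : {vspace K}) : Prop :=
  exists b : K, b != 0 /\ U = smul b V.

(* full-length: {beta in K^* | beta V = V} = F_q^*  (F_q^* = nonzero elements of 1%VS) *)
Definition full_length (V : {vspace K}) : Prop :=
  forall b : K, b != 0 -> (smul b V = V <-> b \in 1%VS).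

Definition sdist (U W : {vspace K}) : nat :=
  (\dim (U + W) - \dim (U :&: W))%N.

Definition min_dist_gt (C : {vspace K} -> Prop) (D : nat) : Prop :=
  forall U W, C U -> C W -> U != W -> (D < sdist U W)%N.
End Defs.

From HB Require Import structures.
From mathcomp Require Import all_boot all_order all_algebra all_field.
From mathcomp Require Import zify.
Import GRing.Theory.
Local Open Scope ring_scope.

(* If [b] stabilises [U <= V] but not [V], then [U <= V :&: b V], so the
   equidimensional codewords [V] and [b V] are at distance at most
   [2 (dim V - dim U)], contradicting the minimum distance of the orbit of
   [V]; hence [b] stabilises [V], and full-lengthness of [V] puts [b] in F_q.
   The theorem is the case [V = Phi(F_q^m)], [U = Phi(V1)] or [Phi(a V1)]. *)

Section Smul.
Variables (F : finFieldType) (K : fieldExtType F).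
Implicit Types (b : K) (U V W : {vspace K}).

Lemma dim_smul b V : b != 0 -> \dim (smul b V) = \dim V.
Proof. by move=> nz_b; rewrite /smul prodvC dim_cosetv. Qed.

Lemma smulS b U V : (U <= V)%VS -> (smul b U <= smul b V)%VS.
Proof. exact: prodvSr. Qed.

Lemma smul_base b V : b != 0 -> b \in 1%VS -> smul b V = V.
Proof.
move=> nz_b b1; apply/eqP; rewrite eqEdim dim_smul // leqnn andbT.
by rewrite /smul -[X in (_ <= X)%VS]prod1v prodvSl.
Qed.

Lemma sorbit_refl V : sorbit V V.
Proof. by exists 1; rewrite oner_eq0 smul_base ?oner_eq0 ?rpred1. Qed.

Lemma sdist_eqdim U W :
  \dim U = \dim W -> sdist U W = (2 * (\dim U - \dim (U :&: W)))%N.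
Proof.
move=> dUW; rewrite /sdist.
have := dimv_sum_cap U W; have := dimvS (capvSl U W); lia.
Qed.

Lemma full_length_subv U V :
  (U <= V)%VS -> full_length V ->
  min_dist_gt (sorbit V) (2 * (\dim V - \dim U)) -> full_length U.
Proof.
move=> sUV flV md b nz_b; split; last exact: smul_base.
move=> bU; apply/(flV b nz_b); apply/eqP/negPn/negP => neq_bV.
have sU_cap : (U <= V :&: smul b V)%VS by rewrite subv_cap sUV -{1}bU smulS.
have := md V (smul b V) (sorbit_refl V) (ex_intro _ b (conj nz_b erefl)).
rewrite eq_sym neq_bV sdist_eqdim ?dim_smul // => /(_ isT).
have := dimvS sU_cap; lia.
Qed.

End Smul.

Theorem proposition2p6 (F : finFieldType) (K1 K2 : fieldExtType F)
    (r m n k : nat) (V1 : {vspace K1}) (Phi : 'Hom(K1, K2)) :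
  (1 < r)%N -> (1 < m)%N -> n = (r * m)%N -> (0 < k)%N -> (k <= m)%N ->
  \dim {:K1} = m -> \dim {:K2} = n ->
  \dim V1 = k ->
  lker Phi = 0%VS ->
  full_length (limg Phi) ->
  min_dist_gt (sorbit (limg Phi)) (2 * (m - k)) ->
  full_length (lfun_img Phi V1) /\
  (forall a : K1, a != 0 -> full_length (lfun_img Phi (smul a V1))).
Proof.
move=> _ _ _ _ _ dimK1 _ dimV1 ker0 flPhi md.
have dim_img W : \dim (Phi @: W) = \dim W by rewrite limg_dim_eq // ker0 capv0.
have flW W : \dim W = k -> full_length (Phi @: W).
  move=> dimW; apply: full_length_subv flPhi _; first exact: limgS (subvf W).
  by rewrite !dim_img dimK1 dimW.
split; first exact: flW.
by move=> a nz_a; apply: flW; rewrite dim_smul.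
Qed.
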